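(* Consider Dallal's model and the hypotheses $H_0:\lambda_0=\lambda_1$ versus $H_1:\lambda_0\ne\lambda_1$. Under $H_1$ use the prior on $(0,1)^3$ $$\pi_{H_1}(\gamma,u,v)=\frac1K\frac{2^{1/2}}{B(\tfrac12,\tfrac12)}\frac{\gamma^{-1/2}(1-\gamma)^{-1/2}}{1+\gamma}(u+rv)^d\frac{u^{-1/2}(1-u)^{-1/2}}{B(\tfrac12,\tfrac12)}\frac{v^{-1/2}(1-v)^{-1/2}}{B(\tfrac12,\tfrac12)}$$ ($d\ge0$, $K$ the normalizing constant), and under $H_0$, writing $\theta=(1+\gamma)\lambda$ for the common value $\lambda=\lambda_0=\lambda_1$, use the prior $\pi_{H_0}(\gamma,\theta)=\frac{2^{1/2}}{B(\frac12,\frac12)}\frac{\gamma^{-1/2}(1-\gamma)^{-1/2}}{1+\gamma}\frac{\theta^{a-1}(1-\theta)^{-1/2}}{B(a,\frac12)}$ on $(0,1)^2$ ($a>0$). Then the marginal predictive probabilities of the data are $$p_{H_0}(D)=C\,\frac{B(m_{1+}+\tfrac12,m_{2+}+\tfrac12)}{B(\tfrac12,\tfrac12)}\frac{B(m_{1+}+m_{2+}+a,m_{0+}+\tfrac12)}{B(a,\tfrac12)},$$ $$p_{H_1}(D)=C\,\frac{B(m_{1+}+\tfrac12,m_{2+}+\tfrac12)B(m_{10}+m_{20}+\tfrac12,m_{00}+\tfrac12)B(m_{11}+m_{21}+\tfrac12,m_{01}+\tfrac12)}{B(\tfrac12,\tfrac12)^3}\cdot\frac{I}{K},$$ where $C=\binom{m_{+0}}{m_{00},m_{10},m_{20}}\binom{m_{+1}}{m_{01},m_{11},m_{21}}$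 and $I=\mathbb E[(U'+rV')^d]$ for independent $U'\sim\mathrm{Beta}(m_{10}+m_{20}+\tfrac12,m_{00}+\tfrac12)$, $V'\sim\mathrm{Beta}(m_{11}+m_{21}+\tfrac12,m_{01}+\tfrac12)$. Consequently the Bayes factor $BF_\lambda=p_{H_0}(D)/p_{H_1}(D)$ satisfies $$\frac1{BF_\lambda}=\frac{B(m_{10}+m_{20}+\tfrac12,m_{00}+\tfrac12)\,B(m_{11}+m_{21}+\tfrac12,m_{01}+\tfrac12)\,B(a,\tfrac12)}{B(m_{1+}+m_{2+}+a,m_{0+}+\tfrac12)\,B(\tfrac12,\tfrac12)^2}\cdot\frac IK .$$ In particular, for $d=0$ one has $K=I=1$.
   Context: Dallal's model: for groups $i\in\{0,1\}$ with fixed sizes $m_{+i}$, $(m_{0i},m_{1i},m_{2i})$ is trinomial with probabilities $1-(1+\gamma)\lambda_i$, $2\gamma\lambda_i$, $(1-\gamma)\lambda_i$, independently over $i$, $0<\gamma<1$, $0<\lambda_i<1/(1+\gamma)$. $U=(1+\gamma)\lambda_0$, $V=(1+\gamma)\lambda_1$, $r=m_{+1}/m_{+0}$, $m_{1+}=m_{10}+m_{11}$, $m_{2+}=m_{20}+m_{21}$, $m_{0+}=m_{00}+m_{01}$. The marginal predictive probability under a hypothesis is the likelihood (including multinomial coefficients) integrated against that hypothesis's prior. $B$ is the Beta function. *)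

From Stdlib Require Import Reals Lra Lia Arith ClassicalEpsilon Factorial.
Open Scope R_scope.

Definition improper01 (f : R -> R) (l : R) : Prop :=
  forall eps, 0 < eps -> exists del, 0 < del /\
    forall a b, 0 < a < del -> 1 - del < b < 1 ->
      exists pr : Riemann_integrable f a b, Rabs (RiemannInt pr - l) < eps.

Definition Int01 (f : R -> R) : R :=
  epsilon (inhabits 0) (fun l => improper01 f l).

(* Iterated integrals over (0,1)^2 and (0,1)^3 (all integrands below are
   nonnegative, so by Tonelli these are the integrals over the cubes). *)
Definition Int2 (F : R -> R -> R) : R :=
  Int01 (fun x => Int01 (fun y => F x y)).
Definition Int3 (F : R -> R -> R -> R) : R :=
  Int01 (fun x => Int01 (fun y => Int01 (fun z => F x y z))).

Definition Beta (x y : R) : R :=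
  Int01 (fun t => Rpower t (x - 1) * Rpower (1 - t) (y - 1)).

Definition beta_dens (al be t : R) : R :=
  Rpower t (al - 1) * Rpower (1 - t) (be - 1) / Beta al be.

Definition multinom (n0 n1 n2 : nat) : R :=
  INR (fact (n0 + n1 + n2)) / (INR (fact n0) * INR (fact n1) * INR (fact n2)).

Definition trinom_pmf (n0 n1 n2 : nat) (g l : R) : R :=
  multinom n0 n1 n2 * (1 - (1 + g) * l) ^ n0 * (2 * g * l) ^ n1
  * ((1 - g) * l) ^ n2.

Definition gamma_prior (g : R) : R :=
  sqrt 2 / Beta (/2) (/2) * (Rpower g (-/2) * Rpower (1 - g) (-/2) / (1 + g)).

Definition piH1_unnorm (r d g u v : R) : R :=
  gamma_prior g * Rpower (u + r * v) d
  * (Rpower u (-/2) * Rpower (1 - u) (-/2) / Beta (/2) (/2))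
  * (Rpower v (-/2) * Rpower (1 - v) (-/2) / Beta (/2) (/2)).

Definition Kconst (r d : R) : R := Int3 (piH1_unnorm r d).

Definition piH1 (r d g u v : R) : R := / Kconst r d * piH1_unnorm r d g u v.

Definition piH0 (a g th : R) : R :=
  gamma_prior g * (Rpower th (a - 1) * Rpower (1 - th) (-/2) / Beta a (/2)).

(* Marginal predictive probabilities: likelihood integrated against prior.
   Under H1, lambda_0 = u/(1+gamma), lambda_1 = v/(1+gamma);
   under H0, lambda_0 = lambda_1 = theta/(1+gamma). *)
Definition pH1 (m00 m10 m20 m01 m11 m21 : nat) (r d : R) : R :=
  Int3 (fun g u v =>
    trinom_pmf m00 m10 m20 g (u / (1 + g)) * trinom_pmf m01 m11 m21 g (v / (1 + g))
    * piH1 r d g u v).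

Definition pH0 (m00 m10 m20 m01 m11 m21 : nat) (a : R) : R :=
  Int2 (fun g th =>
    trinom_pmf m00 m10 m20 g (th / (1 + g)) * trinom_pmf m01 m11 m21 g (th / (1 + g))
    * piH0 a g th).

Definition Iconst (al0 be0 al1 be1 r d : R) : R :=
  Int2 (fun u v => Rpower (u + r * v) d * beta_dens al0 be0 u * beta_dens al1 be1 v).

From Stdlib Require Import Reals Lra Lia Classical_Prop ClassicalEpsilon
  FunctionalExtensionality PropExtensionality.
From Coquelicot Require Import Coquelicot.
Open Scope R_scope.

(* Substituting lambda_i = u / (1 + gamma) (resp. theta / (1 + gamma)) splits each
   trinomial likelihood into a factor in u (resp. theta) alone and a factor in gamma
   alone, namely powers of the conditional cell probabilities 2 gamma / (1 + gamma) and
   (1 - gamma) / (1 + gamma).  Against the gamma prior the latter integrates, after the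
   change of variable gamma |-> 2 gamma / (1 + gamma), to B(m1+ + 1/2, m2+ + 1/2) under
   both hypotheses.  What remains is a Beta integral in theta under H0 and, under H1,
   the integral of (u + r v)^d against two Beta kernels; the same integral with both
   kernels equal to the arcsine kernel gives K.
   All integrals are improper Riemann integrals over (0,1): they exist because the
   integrands are nonnegative with bounded partial integrals, and the iterated
   (u,v)-integral exists because its inner integral is continuous in u. *)

(** * Improper integrals over (0,1) *)

(* [improper01] phrased with Coquelicot's [RInt]; the bound [del <= /2] makes
   [[del/2, 1 - del/2]] an admissible sample interval. *)
Definition is_Int01 (f : R -> R) (l : R) : Prop :=
  forall eps, 0 < eps -> exists del, 0 < del /\ del <= /2 /\
    forall a b, 0 < a < del -> 1 - del < b < 1 ->
      ex_RInt f a b /\ Rabs (RInt f a b - l) < eps.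

Definition ex_RInt_loc01 (f : R -> R) : Prop :=
  forall a b, 0 < a -> a <= b -> b < 1 -> ex_RInt f a b.

Lemma is_Int01_improper01 f l : is_Int01 f l <-> improper01 f l.
Proof.
  split.
  - intros H eps Heps. destruct (H eps Heps) as [del [Hdel [_ Hab]]].
    exists del; split; [exact Hdel|]. intros a b Ha Hb.
    destruct (Hab a b Ha Hb) as [Hex Hl].
    exists (ex_RInt_Reals_0 _ _ _ Hex). rewrite <- RInt_Reals. exact Hl.
  - intros H eps Heps. destruct (H eps Heps) as [del [Hdel Hab]].
    assert (Hm := Rmin_l del (/2)).
    exists (Rmin del (/2)); split; [apply Rmin_pos; lra|split; [apply Rmin_r|]].
    intros a b Ha Hb. destruct (Hab a b) as [pr Hpr]; [lra|lra|].
    split; [exact (ex_RInt_Reals_1 _ _ _ pr)|].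
    rewrite (RInt_Reals _ _ _ pr). exact Hpr.
Qed.

Lemma ex_RInt_loc01_continuous f :
  (forall x, 0 < x < 1 -> continuous f x) -> ex_RInt_loc01 f.
Proof.
  intros Hc a b Ha Hab Hb. apply (ex_RInt_continuous (V:=R_CompleteNormedModule)).
  intros z Hz. rewrite Rmin_left, Rmax_right in Hz by lra. apply Hc; lra.
Qed.

Lemma wider_interval del a b : 0 < del -> 0 < a -> b < 1 ->
  exists a' b', 0 < a' < del /\ a' <= a /\ b <= b' /\ 1 - del < b' < 1.
Proof.
  intros Hdel Ha Hb. exists (Rmin (a / 2) (del / 2)), (Rmax ((1 + b) / 2) (1 - del / 2)).
  unfold Rmin, Rmax; repeat destruct Rle_dec; repeat split; lra.
Qed.

Lemma RInt_le_wider f a' a b b' : a' <= a -> a <= b -> b <= b' ->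
  ex_RInt f a' b' -> (forall x, a' < x < b' -> 0 <= f x) ->
  RInt f a b <= RInt f a' b'.
Proof.
  intros Ha Hab Hb Hex Hf.
  assert (Ea'b : ex_RInt f a' b) by (apply (ex_RInt_Chasles_1 f a' b b'); [lra|exact Hex]).
  assert (Ea'a : ex_RInt f a' a) by (apply (ex_RInt_Chasles_1 f a' a b); [lra|exact Ea'b]).
  assert (Eab : ex_RInt f a b) by (apply (ex_RInt_Chasles_2 f a' a b); [lra|exact Ea'b]).
  assert (Ebb' : ex_RInt f b b') by (apply (ex_RInt_Chasles_2 f a' b b'); [lra|exact Hex]).
  rewrite <- (RInt_Chasles f a' b b' Ea'b Ebb'), <- (RInt_Chasles f a' a b Ea'a Eab).
  assert (0 <= RInt f a' a) by (apply RInt_ge_0; auto; intros; apply Hf; lra).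
  assert (0 <= RInt f b b') by (apply RInt_ge_0; auto; intros; apply Hf; lra).
  unfold plus; simpl; lra.
Qed.

Lemma is_Int01_ex_RInt_loc01 f l : is_Int01 f l -> ex_RInt_loc01 f.
Proof.
  intros H a b Ha Hab Hb.
  destruct (H 1 Rlt_0_1) as [del [Hdel [_ Hab']]].
  destruct (wider_interval del a b) as [a' [b' [Ha' [Ha'a [Hbb' Hb']]]]]; auto.
  destruct (Hab' a' b' Ha' Hb') as [Hex _].
  apply (ex_RInt_Chasles_2 f a' a b); [lra|].
  apply (ex_RInt_Chasles_1 f a' b b'); [lra|exact Hex].
Qed.

Lemma is_Int01_RInt_le f l : is_Int01 f l -> (forall x, 0 < x < 1 -> 0 <= f x) ->
  forall a b, 0 < a -> a <= b -> b < 1 -> RInt f a b <= l.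
Proof.
  intros H Hf a b Ha Hab Hb. apply Rle_plus_epsilon. intros eps Heps.
  destruct (H eps Heps) as [del [Hdel [_ Hab']]].
  destruct (wider_interval del a b) as [a' [b' [Ha' [Ha'a [Hbb' Hb']]]]]; auto.
  destruct (Hab' a' b' Ha' Hb') as [Hex Hl]. apply Rabs_def2 in Hl.
  assert (RInt f a b <= RInt f a' b')
    by (apply RInt_le_wider; auto; intros; apply Hf; lra).
  lra.
Qed.

Lemma is_Int01_ge_0 f l : is_Int01 f l -> (forall x, 0 < x < 1 -> 0 <= f x) -> 0 <= l.
Proof.
  intros H Hf. apply Rle_trans with (RInt f (/4) (3/4)).
  - apply RInt_ge_0; [lra| |intros; apply Hf; lra].
    apply (is_Int01_ex_RInt_loc01 f l H); lra.
  - apply (is_Int01_RInt_le f l H Hf); lra.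
Qed.

Lemma is_Int01_le f g l m : is_Int01 f l -> is_Int01 g m ->
  (forall x, 0 < x < 1 -> f x <= g x) -> l <= m.
Proof.
  intros Hf Hg Hfg. apply Rle_plus_epsilon. intros eps Heps.
  destruct (Hf (eps / 2)) as [d1 [Hd1 [Hd1' H1]]]; [lra|].
  destruct (Hg (eps / 2)) as [d2 [Hd2 [Hd2' H2]]]; [lra|].
  assert (Hm1 := Rmin_l d1 d2). assert (Hm2 := Rmin_r d1 d2).
  assert (Hd : 0 < Rmin d1 d2) by (apply Rmin_pos; lra).
  set (d := Rmin d1 d2) in *.
  destruct (H1 (d / 2) (1 - d / 2)) as [E1 L1]; [lra|lra|].
  destruct (H2 (d / 2) (1 - d / 2)) as [E2 L2]; [lra|lra|].
  assert (RInt f (d / 2) (1 - d / 2) <= RInt g (d / 2) (1 - d / 2))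
    by (apply RInt_le; auto; [lra|intros; apply Hfg; lra]).
  apply Rabs_def2 in L1. apply Rabs_def2 in L2. lra.
Qed.

Lemma is_Int01_unique f l1 l2 : is_Int01 f l1 -> is_Int01 f l2 -> l1 = l2.
Proof.
  intros H1 H2. apply Rle_antisym; [apply (is_Int01_le f f)|apply (is_Int01_le f f)];
    auto; intros; apply Rle_refl.
Qed.

Lemma Int01_unique f l : is_Int01 f l -> Int01 f = l.
Proof.
  intros H. apply (is_Int01_unique f); [|exact H].
  apply is_Int01_improper01. unfold Int01. apply epsilon_spec.
  exists l. apply is_Int01_improper01, H.
Qed.

Lemma is_Int01_ext f g l : (forall x, 0 < x < 1 -> f x = g x) -> is_Int01 f l -> is_Int01 g l.
Proof.
  intros Hfg H eps Heps. destruct (H eps Heps) as [del [Hdel [Hdel2 Hab]]].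
  exists del; split; [exact Hdel|split; [exact Hdel2|]]. intros a b Ha Hb.
  destruct (Hab a b Ha Hb) as [Hex Hl].
  assert (Hr : forall x, Rmin a b < x < Rmax a b -> f x = g x).
  { intros x Hx. rewrite Rmin_left, Rmax_right in Hx by lra. apply Hfg; lra. }
  split; [exact (ex_RInt_ext _ _ _ _ Hr Hex)|].
  rewrite <- (RInt_ext _ _ _ _ Hr). exact Hl.
Qed.

Lemma Int01_ext f g : (forall x, 0 < x < 1 -> f x = g x) -> Int01 f = Int01 g.
Proof.
  intros Hfg. unfold Int01. f_equal.
  apply functional_extensionality; intro l. apply propositional_extensionality.
  rewrite <- !is_Int01_improper01.
  split; apply is_Int01_ext; [exact Hfg|intros; symmetry; auto].
Qed.

Lemma is_Int01_scal f l c : is_Int01 f l -> is_Int01 (fun x => c * f x) (c * l).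
Proof.
  intros H eps Heps.
  assert (Hc : 0 < Rabs c + 1) by (generalize (Rabs_pos c); lra).
  destruct (H (eps / (Rabs c + 1))) as [del [Hdel [Hdel2 Hab]]].
  { apply Rdiv_lt_0_compat; lra. }
  exists del; split; [exact Hdel|split; [exact Hdel2|]]. intros a b Ha Hb.
  destruct (Hab a b Ha Hb) as [Hex Hl].
  split; [exact (ex_RInt_scal _ _ _ c Hex)|].
  rewrite (RInt_scal f a b c Hex : RInt (fun x => c * f x) a b = c * RInt f a b).
  replace (c * RInt f a b - c * l) with (c * (RInt f a b - l)) by ring.
  rewrite Rabs_mult.
  assert (Rabs c * Rabs (RInt f a b - l) <= Rabs c * (eps / (Rabs c + 1)))
    by (apply Rmult_le_compat_l; [apply Rabs_pos|lra]).
  assert (Rabs c * (eps / (Rabs c + 1)) < eps).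
  { assert (0 < eps / (Rabs c + 1)) by (apply Rdiv_lt_0_compat; lra).
    replace (Rabs c * (eps / (Rabs c + 1))) with (eps - eps / (Rabs c + 1)) by (field; lra).
    lra. }
  lra.
Qed.

Lemma is_Int01_minus f g l m : is_Int01 f l -> is_Int01 g m ->
  is_Int01 (fun x => f x - g x) (l - m).
Proof.
  intros Hf Hg eps Heps.
  destruct (Hf (eps / 2)) as [d1 [Hd1 [Hd1' H1]]]; [lra|].
  destruct (Hg (eps / 2)) as [d2 [Hd2 [Hd2' H2]]]; [lra|].
  assert (Hm1 := Rmin_l d1 d2). assert (Hm2 := Rmin_r d1 d2).
  exists (Rmin d1 d2). split; [apply Rmin_pos; lra|split; [lra|]].
  intros a b Ha Hb.
  destruct (H1 a b) as [E1 L1]; [lra|lra|].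
  destruct (H2 a b) as [E2 L2]; [lra|lra|].
  split; [exact (ex_RInt_minus f g a b E1 E2)|].
  rewrite (RInt_minus f g a b E1 E2 : RInt (fun x => f x - g x) a b = RInt f a b - RInt g a b).
  apply Rabs_def2 in L1. apply Rabs_def2 in L2. apply Rabs_def1; lra.
Qed.

Lemma is_Int01_Rabs_minus_le f g h l m k e : is_Int01 f l -> is_Int01 g m -> is_Int01 h k ->
  (forall x, 0 < x < 1 -> Rabs (f x - g x) <= e * h x) -> Rabs (l - m) <= e * k.
Proof.
  intros Hf Hg Hh Hfg.
  assert (Hfg' : forall x, 0 < x < 1 -> - (e * h x) <= f x - g x <= e * h x).
  { intros x Hx. specialize (Hfg x Hx). assert (H1 := Rle_abs (f x - g x)).
    assert (H2 := Rle_abs (- (f x - g x))). rewrite Rabs_Ropp in H2. lra. }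
  assert (Hd := is_Int01_minus f g l m Hf Hg).
  apply Rabs_le; split.
  - replace (- (e * k)) with (- e * k) by ring.
    apply (is_Int01_le _ _ _ _ (is_Int01_scal h k (- e) Hh) Hd).
    intros x Hx. specialize (Hfg' x Hx). lra.
  - apply (is_Int01_le _ _ _ _ Hd (is_Int01_scal h k e Hh)).
    intros x Hx. specialize (Hfg' x Hx). lra.
Qed.

(* Monotone convergence: the integral is the supremum of the partial integrals. *)
Lemma ex_is_Int01_bounded f M : ex_RInt_loc01 f -> (forall x, 0 < x < 1 -> 0 <= f x) ->
  (forall a b, 0 < a -> a <= b -> b < 1 -> RInt f a b <= M) ->
  exists l, is_Int01 f l /\ l <= M.
Proof.
  intros Hex Hf HM.
  set (E := fun y => exists a b, 0 < a /\ a <= b /\ b < 1 /\ y = RInt f a b).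
  assert (HEM : is_upper_bound E M).
  { intros y [a [b [? [? [? ->]]]]]. apply HM; auto. }
  assert (HE : exists y, E y) by (exists (RInt f (/4) (3/4)), (/4), (3/4); repeat split; lra).
  destruct (completeness E (ex_intro _ M HEM) HE) as [l [Hub Hlub]].
  exists l. split; [|exact (Hlub M HEM)].
  intros eps Heps.
  assert (Hnear : exists y, E y /\ l - eps < y).
  { apply NNPP; intro Hno. assert (l <= l - eps); [|lra].
    apply Hlub. intros y Hy. apply Rnot_lt_le; intro Hy'. apply Hno. exists y; auto. }
  destruct Hnear as [y [[a0 [b0 [Ha0 [Hab0 [Hb0 ->]]]]] Hy]].
  assert (H1 := Rmin_l (Rmin a0 (1 - b0)) (/2)). assert (H2 := Rmin_r (Rmin a0 (1 - b0)) (/2)).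
  assert (H3 := Rmin_l a0 (1 - b0)). assert (H4 := Rmin_r a0 (1 - b0)).
  exists (Rmin (Rmin a0 (1 - b0)) (/2)).
  split; [repeat apply Rmin_pos; lra|split; [lra|]].
  intros a b Ha Hb. split; [apply Hex; lra|].
  assert (RInt f a0 b0 <= RInt f a b)
    by (apply RInt_le_wider; try lra; [apply Hex; lra|intros; apply Hf; lra]).
  assert (RInt f a b <= l) by (apply Hub; exists a, b; repeat split; lra).
  apply Rabs_def1; lra.
Qed.

Lemma ex_is_Int01_le f g m : ex_RInt_loc01 f ->
  (forall x, 0 < x < 1 -> 0 <= f x <= g x) -> is_Int01 g m ->
  exists l, is_Int01 f l /\ l <= m.
Proof.
  intros Hex Hfg Hg. apply ex_is_Int01_bounded; [exact Hex|intros x Hx; apply Hfg, Hx|].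
  intros a b Ha Hab Hb. apply Rle_trans with (RInt g a b).
  - apply RInt_le; auto; [apply (is_Int01_ex_RInt_loc01 g m Hg); auto|].
    intros x Hx; apply Hfg; lra.
  - apply (is_Int01_RInt_le g m Hg); auto. intros x Hx; generalize (Hfg x Hx); lra.
Qed.

(** * Powers and Beta kernels *)

Lemma Rpower_gt_0 x p : 0 < Rpower x p.
Proof. apply exp_pos. Qed.

Lemma Rle_Rpower_01 x p q : 0 < x <= 1 -> p <= q -> Rpower x q <= Rpower x p.
Proof.
  intros Hx Hpq. unfold Rpower.
  assert (ln x <= 0) by (rewrite <- ln_1; apply ln_le; lra).
  destruct (Req_dec (q * ln x) (p * ln x)) as [E|E]; [rewrite E; lra|].
  left; apply exp_increasing; nra.
Qed.

Lemma continuous_Rpower_comp (f : R -> R) p x : continuous f x -> 0 < f x ->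
  continuous (fun t => Rpower (f t) p) x.
Proof.
  intros Hf Hpos. apply (continuous_comp f (fun t => Rpower t p)); [exact Hf|].
  apply (ex_derive_continuous (K:=R_AbsRing) (V:=R_NormedModule)).
  exists (p * Rpower (f x) (p - 1)).
  apply is_derive_Reals, derivable_pt_lim_power, Hpos.
Qed.

Lemma continuous_Rpower p x : 0 < x -> continuous (fun t => Rpower t p) x.
Proof. intros Hx. apply (continuous_Rpower_comp (fun t => t)); [apply continuous_id|exact Hx]. Qed.

Lemma continuous_Rpower_1m p x : x < 1 -> continuous (fun t => Rpower (1 - t) p) x.
Proof.
  intros Hx. apply continuous_Rpower_comp; [|lra].
  apply (continuous_minus (fun _ => 1) (fun t => t)); [apply continuous_const|apply continuous_id].
Qed.

Lemma INR_half_gt_0 n : 0 < INR n + /2.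
Proof. generalize (pos_INR n); lra. Qed.

Lemma Rpower_INR_add t n p : 0 < t -> Rpower t (INR n + p) = t ^ n * Rpower t p.
Proof. intros Ht. rewrite Rpower_plus, Rpower_pow by exact Ht. reflexivity. Qed.

Lemma Rpower_mhalf t : 0 < t -> Rpower t (- /2) = / sqrt t.
Proof. intros Ht. rewrite Rpower_Ropp, Rpower_sqrt by exact Ht. reflexivity. Qed.

Lemma Rpower_half_pred t n : 0 < t -> Rpower t (INR n + /2 - 1) = t ^ n * / sqrt t.
Proof.
  intros Ht. replace (INR n + /2 - 1) with (INR n + - /2) by field.
  rewrite Rpower_INR_add, Rpower_mhalf by exact Ht. reflexivity.
Qed.

Definition beta_kernel (x y t : R) : R := Rpower t (x - 1) * Rpower (1 - t) (y - 1).

Lemma beta_kernel_gt_0 x y t : 0 < beta_kernel x y t.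
Proof. apply Rmult_lt_0_compat; apply Rpower_gt_0. Qed.

Lemma continuous_beta_kernel x y t : 0 < t < 1 -> continuous (beta_kernel x y) t.
Proof.
  intros Ht. apply (continuous_mult (fun t => Rpower t (x - 1)) (fun t => Rpower (1 - t) (y - 1))).
  - apply continuous_Rpower; lra.
  - apply continuous_Rpower_1m; lra.
Qed.

(* On each half of (0,1) one of the two factors is at most 2. *)
Lemma beta_kernel_le x y t : 0 < x -> 0 < y -> 0 < t < 1 ->
  beta_kernel x y t <= 2 * (Rpower t (x - 1) + Rpower (1 - t) (y - 1)).
Proof.
  intros Hx Hy Ht. unfold beta_kernel.
  assert (P1 := Rpower_gt_0 t (x - 1)). assert (P2 := Rpower_gt_0 (1 - t) (y - 1)).
  assert (Hinv : forall s p, 0 < s <= 1 -> -1 <= p -> Rpower s p <= / s).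
  { intros s p Hs Hp. replace (/ s) with (Rpower s (- (1))) by (rewrite Rpower_Ropp, Rpower_1; lra).
    apply Rle_Rpower_01; lra. }
  destruct (Rle_lt_dec t (/2)) as [Ht2|Ht2].
  - assert (Rpower (1 - t) (y - 1) <= / (1 - t)) by (apply Hinv; lra).
    assert (/ (1 - t) <= 2) by (rewrite <- (Rinv_inv 2); apply Rinv_le_contravar; lra).
    nra.
  - assert (Rpower t (x - 1) <= / t) by (apply Hinv; lra).
    assert (/ t <= 2) by (rewrite <- (Rinv_inv 2); apply Rinv_le_contravar; lra).
    nra.
Qed.

Lemma is_RInt_beta_majorant x y a b : 0 < x -> 0 < y -> 0 < a -> a <= b -> b < 1 ->
  is_RInt (fun t => 2 * (Rpower t (x - 1) + Rpower (1 - t) (y - 1))) a b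
    (2 * (/ x * (Rpower b x - Rpower a x) + / y * (Rpower (1 - a) y - Rpower (1 - b) y))).
Proof.
  intros Hx Hy Ha Hab Hb.
  set (F := fun t => 2 * (/ x * Rpower t x - / y * Rpower (1 - t) y)).
  replace (2 * _) with (minus (F b) (F a))
    by (unfold F, minus, plus, opp; simpl; ring).
  apply (is_RInt_derive (V:=R_CompleteNormedModule)); intros z Hz;
    rewrite Rmin_left, Rmax_right in Hz by lra.
  - assert (D1 : is_derive (fun t => Rpower t x) z (x * Rpower z (x - 1)))
      by (apply is_derive_Reals, derivable_pt_lim_power; lra).
    assert (D2 : is_derive (fun t => Rpower (1 - t) y) z (- (y * Rpower (1 - z) (y - 1)))).
    { replace (- _) with (scal (-1) (y * Rpower (1 - z) (y - 1)))
        by (unfold scal; simpl; unfold mult; simpl; ring).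
      apply (is_derive_comp (fun s => Rpower s y) (fun t => 1 - t)).
      - apply is_derive_Reals, derivable_pt_lim_power; lra.
      - auto_derive; auto; ring. }
    replace (2 * (Rpower z (x - 1) + Rpower (1 - z) (y - 1)))
      with (scal 2 (minus (scal (/ x) (x * Rpower z (x - 1)))
                          (scal (/ y) (- (y * Rpower (1 - z) (y - 1))))))
      by (unfold scal, minus, plus, opp; simpl; unfold mult; simpl; field; lra).
    apply (is_derive_scal (fun t => / x * Rpower t x - / y * Rpower (1 - t) y)).
    apply (is_derive_minus (fun t => / x * Rpower t x) (fun t => / y * Rpower (1 - t) y));
      apply is_derive_scal; assumption.
  - apply (continuous_scal_r 2 (fun t => Rpower t (x - 1) + Rpower (1 - t) (y - 1))).
    apply (continuous_plus (fun t => Rpower t (x - 1)) (fun t => Rpower (1 - t) (y - 1))).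
    + apply continuous_Rpower; lra.
    + apply continuous_Rpower_1m; lra.
Qed.

Lemma RInt_beta_kernel_le x y a b : 0 < x -> 0 < y -> 0 < a -> a <= b -> b < 1 ->
  RInt (beta_kernel x y) a b <= 2 * (/ x + / y).
Proof.
  intros Hx Hy Ha Hab Hb.
  assert (Hmaj := is_RInt_beta_majorant x y a b Hx Hy Ha Hab Hb).
  apply Rle_trans with
    (2 * (/ x * (Rpower b x - Rpower a x) + / y * (Rpower (1 - a) y - Rpower (1 - b) y))).
  - rewrite <- (is_RInt_unique (V:=R_CompleteNormedModule) _ _ _ _ Hmaj).
    apply RInt_le; [lra| |eexists; exact Hmaj|intros; apply beta_kernel_le; auto; lra].
    apply ex_RInt_loc01_continuous; auto. intros; apply continuous_beta_kernel; auto.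
  - assert (Hle1 : forall t p, 0 < t <= 1 -> 0 <= p -> Rpower t p <= 1).
    { intros t p Ht Hp. rewrite <- (Rpower_O t) by lra. apply Rle_Rpower_01; lra. }
    assert (Rpower b x <= 1) by (apply Hle1; lra).
    assert (Rpower (1 - a) y <= 1) by (apply Hle1; lra).
    assert (Hax := Rpower_gt_0 a x). assert (Hby := Rpower_gt_0 (1 - b) y).
    assert (0 < / x) by (apply Rinv_0_lt_compat; lra).
    assert (0 < / y) by (apply Rinv_0_lt_compat; lra).
    nra.
Qed.

Lemma is_Int01_Beta x y : 0 < x -> 0 < y -> is_Int01 (beta_kernel x y) (Beta x y).
Proof.
  intros Hx Hy.
  destruct (ex_is_Int01_bounded (beta_kernel x y) (2 * (/ x + / y))) as [l [Hl _]].
  - apply ex_RInt_loc01_continuous. intros; apply continuous_beta_kernel; auto.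
  - intros; left; apply beta_kernel_gt_0.
  - intros; apply RInt_beta_kernel_le; auto.
  - change (is_Int01 (beta_kernel x y) (Int01 (beta_kernel x y))).
    rewrite (Int01_unique _ _ Hl). exact Hl.
Qed.

Lemma Beta_gt_0 x y : 0 < x -> 0 < y -> 0 < Beta x y.
Proof.
  intros Hx Hy. apply Rlt_le_trans with (RInt (beta_kernel x y) (/4) (3/4)).
  - apply RInt_gt_0; [lra|intros; apply beta_kernel_gt_0|].
    intros; apply continuous_beta_kernel; lra.
  - apply (is_Int01_RInt_le _ _ (is_Int01_Beta x y Hx Hy)); try lra.
    intros; left; apply beta_kernel_gt_0.
Qed.

(** * The integral over gamma *)

(* Given that an individual does not fall in cell 0, it falls in cell 1 with
   probability [2 g / (1 + g)] and in cell 2 with probability [(1 - g) / (1 + g)]. *)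
Definition cell_ratio (g : R) : R := 2 * g / (1 + g).

Lemma cell_ratio_01 g : 0 < g < 1 -> 0 < cell_ratio g < 1.
Proof.
  intros Hg. unfold cell_ratio. split; [apply Rdiv_lt_0_compat; lra|].
  apply (Rmult_lt_reg_r (1 + g)); [lra|].
  unfold Rdiv. rewrite Rmult_assoc, Rinv_l by lra. lra.
Qed.

Lemma cell_ratio_bounds g : 0 < g < 1 -> g <= cell_ratio g <= 2 * g.
Proof.
  intros Hg. unfold cell_ratio.
  assert (0 <= g * (1 - g) / (1 + g)) by (apply Rdiv_le_0_compat; nra).
  assert (0 <= 2 * g * g / (1 + g)) by (apply Rdiv_le_0_compat; nra).
  assert (2 * g / (1 + g) = g + g * (1 - g) / (1 + g)) by (field; lra).
  assert (2 * g / (1 + g) = 2 * g - 2 * g * g / (1 + g)) by (field; lra).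
  lra.
Qed.


(* [B(1/2,1/2)] times the gamma prior times the gamma part of both likelihoods,
   with [n1 = m1+] and [n2 = m2+]. *)
Definition gamma_factor (n1 n2 : nat) (g : R) : R :=
  sqrt 2 * (Rpower g (- /2) * Rpower (1 - g) (- /2) / (1 + g))
  * cell_ratio g ^ n1 * ((1 - g) / (1 + g)) ^ n2.

Lemma gamma_factor_eq n1 n2 g : 0 < g < 1 ->
  gamma_factor n1 n2 g = 2 / (1 + g) ^ 2 * beta_kernel (INR n1 + /2) (INR n2 + /2) (cell_ratio g).
Proof.
  intros Hg. unfold gamma_factor, beta_kernel.
  assert (E1 : 1 - cell_ratio g = (1 - g) / (1 + g)) by (unfold cell_ratio; field; lra).
  assert (HT := cell_ratio_01 g Hg).
  rewrite E1, !Rpower_half_pred by (try apply Rdiv_lt_0_compat; lra).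
  rewrite !Rpower_mhalf by lra. unfold cell_ratio.
  rewrite (sqrt_div (2 * g) (1 + g)), (sqrt_mult_alt 2 g), (sqrt_div (1 - g) (1 + g)) by lra.
  assert (S1 : 0 < sqrt (1 + g)) by (apply sqrt_lt_R0; lra).
  assert (S2 : 0 < sqrt 2) by (apply sqrt_lt_R0; lra).
  assert (S3 : 0 < sqrt g) by (apply sqrt_lt_R0; lra).
  assert (S4 : 0 < sqrt (1 - g)) by (apply sqrt_lt_R0; lra).
  assert (E2 : sqrt (1 + g) * sqrt (1 + g) = 1 + g) by (apply sqrt_sqrt; lra).
  assert (E3 : sqrt 2 * sqrt 2 = 2) by (apply sqrt_sqrt; lra).
  set (A := (2 * g / (1 + g)) ^ n1). set (B := ((1 - g) / (1 + g)) ^ n2).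
  set (s1 := sqrt (1 + g)) in *. set (s2 := sqrt 2) in *.
  rewrite <- E2, <- E3. field; lra.
Qed.

Lemma RInt_gamma_factor n1 n2 a b : 0 < a -> a <= b -> b < 1 ->
  ex_RInt (gamma_factor n1 n2) a b /\
  RInt (gamma_factor n1 n2) a b =
    RInt (beta_kernel (INR n1 + /2) (INR n2 + /2)) (cell_ratio a) (cell_ratio b).
Proof.
  intros Ha Hab Hb.
  set (f := beta_kernel (INR n1 + /2) (INR n2 + /2)).
  assert (HC : is_RInt (fun g => scal (2 / (1 + g) ^ 2) (f (cell_ratio g))) a b
                 (RInt f (cell_ratio a) (cell_ratio b))).
  { apply (is_RInt_comp (V:=R_CompleteNormedModule)); intros z Hz;
      rewrite Rmin_left, Rmax_right in Hz by lra.
    - apply continuous_beta_kernel, cell_ratio_01; lra.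
    - split.
      + unfold cell_ratio. auto_derive; [lra|field; lra].
      + apply (ex_derive_continuous (K:=R_AbsRing) (V:=R_NormedModule)).
        auto_derive. intro; nra. }
  assert (Hext : forall g, Rmin a b < g < Rmax a b ->
                   scal (2 / (1 + g) ^ 2) (f (cell_ratio g)) = gamma_factor n1 n2 g).
  { intros g Hg. rewrite Rmin_left, Rmax_right in Hg by lra.
    rewrite gamma_factor_eq by lra. reflexivity. }
  split.
  - exists (RInt f (cell_ratio a) (cell_ratio b)). exact (is_RInt_ext _ _ _ _ _ Hext HC).
  - apply is_RInt_unique. exact (is_RInt_ext _ _ _ _ _ Hext HC).
Qed.

Lemma is_Int01_gamma_factor n1 n2 :
  is_Int01 (gamma_factor n1 n2) (Beta (INR n1 + /2) (INR n2 + /2)).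
Proof.
  intros eps Heps.
  destruct (is_Int01_Beta _ _ (INR_half_gt_0 n1) (INR_half_gt_0 n2) eps Heps)
    as [del [Hdel [Hdel2 H]]].
  exists (del / 2). split; [lra|split; [lra|]]. intros a b Ha Hb.
  destruct (RInt_gamma_factor n1 n2 a b) as [Hex E]; try lra.
  split; [exact Hex|]. rewrite E.
  assert (Ha' := cell_ratio_bounds a ltac:(lra)).
  assert (Hb' := cell_ratio_bounds b ltac:(lra)).
  assert (Hb1 := cell_ratio_01 b ltac:(lra)).
  apply H; lra.
Qed.

(** * The weight (u + r v)^d *)

Section MixedPowerIntegral.

Variables al0 be0 al1 be1 r d : R.
Hypotheses (Hal0 : 0 < al0) (Hbe0 : 0 < be0) (Hal1 : 0 < al1) (Hbe1 : 0 < be1)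
  (Hr : 0 <= r) (Hd : 0 <= d).

Definition inner_power_integral (u : R) : R :=
  Int01 (fun v => Rpower (u + r * v) d * beta_kernel al1 be1 v).

Definition mixed_power_integral : R :=
  Int01 (fun u => beta_kernel al0 be0 u * inner_power_integral u).

Lemma Rpower_mixed_le u v : 0 < u < 1 -> 0 < v < 1 ->
  Rpower (u + r * v) d <= Rpower (1 + r) d.
Proof. intros Hu Hv. apply Rle_Rpower_l; [exact Hd|split; nra]. Qed.

Lemma is_Int01_inner_power_integral u : 0 < u < 1 ->
  is_Int01 (fun v => Rpower (u + r * v) d * beta_kernel al1 be1 v) (inner_power_integral u)
  /\ 0 <= inner_power_integral u <= Rpower (1 + r) d * Beta al1 be1.
Proof.
  intros Hu.
  destruct (ex_is_Int01_le (fun v => Rpower (u + r * v) d * beta_kernel al1 be1 v)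
              (fun v => Rpower (1 + r) d * beta_kernel al1 be1 v)
              (Rpower (1 + r) d * Beta al1 be1)) as [l [Hl Hlm]].
  - apply ex_RInt_loc01_continuous. intros v Hv.
    apply (continuous_mult (fun v => Rpower (u + r * v) d) (beta_kernel al1 be1)).
    + apply continuous_Rpower_comp; [|nra].
      apply (ex_derive_continuous (K:=R_AbsRing) (V:=R_NormedModule)). auto_derive. exact I.
    + apply continuous_beta_kernel, Hv.
  - intros v Hv. assert (Hp := Rpower_gt_0 (u + r * v) d).
    assert (Hk := beta_kernel_gt_0 al1 be1 v). assert (Hm := Rpower_mixed_le u v Hu Hv).
    split; nra.
  - apply is_Int01_scal, is_Int01_Beta; assumption.
  - unfold inner_power_integral. rewrite (Int01_unique _ _ Hl).
    split; [exact Hl|split; [|exact Hlm]].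
    apply (is_Int01_ge_0 _ _ Hl). intros v Hv. left.
    apply Rmult_lt_0_compat; [apply Rpower_gt_0|apply beta_kernel_gt_0].
Qed.

(* Uniform continuity of [t |-> t ^ d] on [[u0/2, 1 + r]] makes the integrands
   uniformly close as [u -> u0]. *)
Lemma continuous_inner_power_integral u0 : 0 < u0 < 1 -> continuous inner_power_integral u0.
Proof.
  intros Hu0. apply continuity_pt_filterlim. intros eps Heps.
  assert (HB1 := Beta_gt_0 al1 be1 Hal1 Hbe1).
  set (e := eps / (2 * (Beta al1 be1 + 1))).
  assert (He : 0 < e) by (apply Rdiv_lt_0_compat; lra).
  assert (Hc : forall x, u0 / 2 <= x <= 1 + r -> continuity_pt (fun t => Rpower t d) x).
  { intros x Hx. apply derivable_continuous_pt. exists (d * Rpower x (d - 1)).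
    apply derivable_pt_lim_power; lra. }
  destruct (Heine_cor2 Hc (mkposreal e He)) as [del Hdel]. simpl in Hdel.
  assert (Hdel0 := cond_pos del).
  assert (Hm1 := Rmin_l del (Rmin (u0 / 2) (1 - u0))).
  assert (Hm2 := Rmin_r del (Rmin (u0 / 2) (1 - u0))).
  assert (Hm3 := Rmin_l (u0 / 2) (1 - u0)). assert (Hm4 := Rmin_r (u0 / 2) (1 - u0)).
  exists (Rmin del (Rmin (u0 / 2) (1 - u0))). split; [repeat apply Rmin_pos; lra|].
  intros u [_ Hu]. unfold R_dist in *. apply Rabs_def2 in Hu.
  assert (Hu1 : 0 < u < 1) by lra.
  apply Rle_lt_trans with (e * Beta al1 be1).
  - apply (is_Int01_Rabs_minus_le _ _ (beta_kernel al1 be1) _ _ _ e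
             (proj1 (is_Int01_inner_power_integral u Hu1))
             (proj1 (is_Int01_inner_power_integral u0 Hu0)) (is_Int01_Beta _ _ Hal1 Hbe1)).
    intros v Hv. rewrite <- Rmult_minus_distr_r, Rabs_mult.
    rewrite (Rabs_pos_eq (beta_kernel al1 be1 v)) by (left; apply beta_kernel_gt_0).
    apply Rmult_le_compat_r; [left; apply beta_kernel_gt_0|left].
    apply Hdel; try (split; nra). replace (u + r * v - (u0 + r * v)) with (u - u0) by ring.
    apply Rabs_def1; lra.
  - assert (E : e * (2 * (Beta al1 be1 + 1)) = eps) by (unfold e; field; lra).
    nra.
Qed.

Lemma is_Int01_mixed_power_integral :
  is_Int01 (fun u => beta_kernel al0 be0 u * inner_power_integral u) mixed_power_integral.
Proof.
  destruct (ex_is_Int01_le (fun u => beta_kernel al0 be0 u * inner_power_integral u)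
              (fun u => (Rpower (1 + r) d * Beta al1 be1) * beta_kernel al0 be0 u)
              ((Rpower (1 + r) d * Beta al1 be1) * Beta al0 be0)) as [l [Hl _]].
  - apply ex_RInt_loc01_continuous. intros u Hu.
    apply (continuous_mult (beta_kernel al0 be0) inner_power_integral).
    + apply continuous_beta_kernel, Hu.
    + apply continuous_inner_power_integral, Hu.
  - intros u Hu. destruct (is_Int01_inner_power_integral u Hu) as [_ [Q1 Q2]].
    assert (Hk := beta_kernel_gt_0 al0 be0 u). split; nra.
  - apply is_Int01_scal, is_Int01_Beta; assumption.
  - unfold mixed_power_integral. rewrite (Int01_unique _ _ Hl). exact Hl.
Qed.

Lemma Int01_Int01_mixed_power c :
  Int01 (fun u => Int01 (fun v =>
    c * (Rpower (u + r * v) d * beta_kernel al0 be0 u * beta_kernel al1 be1 v)))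
  = c * mixed_power_integral.
Proof.
  apply Int01_unique.
  apply (is_Int01_ext (fun u => c * (beta_kernel al0 be0 u * inner_power_integral u))).
  - intros u Hu. symmetry. apply Int01_unique.
    apply (is_Int01_ext (fun v => (c * beta_kernel al0 be0 u)
                                 * (Rpower (u + r * v) d * beta_kernel al1 be1 v)));
      [intros; ring|].
    rewrite <- Rmult_assoc.
    apply is_Int01_scal, is_Int01_inner_power_integral, Hu.
  - apply is_Int01_scal, is_Int01_mixed_power_integral.
Qed.

Lemma mixed_power_integral_pow0 : d = 0 -> mixed_power_integral = Beta al0 be0 * Beta al1 be1.
Proof.
  intros Hd0.
  apply (is_Int01_unique (fun u => beta_kernel al0 be0 u * inner_power_integral u));
    [apply is_Int01_mixed_power_integral|].
  apply (is_Int01_ext (fun u => Beta al1 be1 * beta_kernel al0 be0 u)).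
  - intros u Hu. rewrite Rmult_comm. f_equal. symmetry. apply Int01_unique.
    apply (is_Int01_ext (beta_kernel al1 be1)); [|apply is_Int01_Beta; assumption].
    intros v Hv. rewrite Hd0, Rpower_O by nra. ring.
  - rewrite Rmult_comm. apply is_Int01_scal, is_Int01_Beta; assumption.
Qed.

End MixedPowerIntegral.

(** * The marginal likelihoods *)

Lemma Int2_product F h k lh lk c : is_Int01 h lh -> is_Int01 k lk ->
  (forall g t, 0 < g < 1 -> 0 < t < 1 -> F g t = c * h g * k t) ->
  Int2 F = c * lh * lk.
Proof.
  intros Hh Hk HF. unfold Int2. apply Int01_unique.
  apply (is_Int01_ext (fun g => (c * lk) * h g)).
  - intros g Hg. symmetry. apply Int01_unique.
    apply (is_Int01_ext (fun t => (c * h g) * k t)); [intros; symmetry; auto|].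
    replace (c * lk * h g) with ((c * h g) * lk) by ring. apply is_Int01_scal, Hk.
  - replace (c * lh * lk) with ((c * lk) * lh) by ring. apply is_Int01_scal, Hh.
Qed.

Lemma Int3_mixed_power F h lh c al0 be0 al1 be1 r d :
  0 < al0 -> 0 < be0 -> 0 < al1 -> 0 < be1 -> 0 <= r -> 0 <= d -> is_Int01 h lh ->
  (forall g u v, 0 < g < 1 -> 0 < u < 1 -> 0 < v < 1 -> F g u v =
     c * h g * (Rpower (u + r * v) d * beta_kernel al0 be0 u * beta_kernel al1 be1 v)) ->
  Int3 F = c * lh * mixed_power_integral al0 be0 al1 be1 r d.
Proof.
  intros Hal0 Hbe0 Hal1 Hbe1 Hr Hd Hh HF. unfold Int3. apply Int01_unique.
  set (M := mixed_power_integral al0 be0 al1 be1 r d).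
  apply (is_Int01_ext (fun g => (c * M) * h g)).
  - intros g Hg. transitivity ((c * h g) * M); [ring|].
    unfold M. rewrite <- Int01_Int01_mixed_power by assumption.
    apply Int01_ext; intros u Hu. apply Int01_ext; intros v Hv. rewrite HF by assumption. ring.
  - replace (c * lh * M) with ((c * M) * lh) by ring. apply is_Int01_scal, Hh.
Qed.

Lemma trinom_pmf_rescaled n0 n1 n2 g t : 0 < g < 1 ->
  trinom_pmf n0 n1 n2 g (t / (1 + g)) =
  multinom n0 n1 n2 * ((1 - t) ^ n0 * t ^ (n1 + n2))
  * (cell_ratio g ^ n1 * ((1 - g) / (1 + g)) ^ n2).
Proof.
  intros Hg. unfold trinom_pmf, cell_ratio. rewrite pow_add.
  replace (1 - (1 + g) * (t / (1 + g))) with (1 - t) by (field; lra).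
  replace (2 * g * (t / (1 + g))) with (2 * g / (1 + g) * t) by (field; lra).
  replace ((1 - g) * (t / (1 + g))) with ((1 - g) / (1 + g) * t) by (field; lra).
  rewrite !Rpow_mult_distr. ring.
Qed.

Lemma Kconst_eq r d : 0 <= r -> 0 <= d ->
  Kconst r d = mixed_power_integral (/2) (/2) (/2) (/2) r d / Beta (/2) (/2) ^ 2.
Proof.
  intros Hr Hd. assert (HB := Beta_gt_0 (/2) (/2) ltac:(lra) ltac:(lra)).
  assert (H00 : is_Int01 (gamma_factor 0 0) (Beta (/2) (/2))).
  { generalize (is_Int01_gamma_factor 0 0). simpl INR. rewrite Rplus_0_l. auto. }
  unfold Kconst.
  rewrite (Int3_mixed_power _ (gamma_factor 0 0) (Beta (/2) (/2)) (/ Beta (/2) (/2) ^ 3)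
             (/2) (/2) (/2) (/2) r d); try lra; [field; lra|exact H00|].
  intros g u v Hg Hu Hv. unfold piH1_unnorm, gamma_prior, gamma_factor, beta_kernel.
  replace (/2 - 1) with (- /2) by field. simpl pow. field; lra.
Qed.

Lemma pH1_eq m00 m10 m20 m01 m11 m21 r d : 0 <= r -> 0 <= d ->
  pH1 m00 m10 m20 m01 m11 m21 r d =
  multinom m00 m10 m20 * multinom m01 m11 m21 * / Kconst r d * / Beta (/2) (/2) ^ 3
  * Beta (INR (m10 + m11) + /2) (INR (m20 + m21) + /2)
  * mixed_power_integral (INR (m10 + m20) + /2) (INR m00 + /2)
      (INR (m11 + m21) + /2) (INR m01 + /2) r d.
Proof.
  intros Hr Hd. assert (HB := Beta_gt_0 (/2) (/2) ltac:(lra) ltac:(lra)).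
  unfold pH1. apply (Int3_mixed_power _ (gamma_factor (m10 + m11) (m20 + m21)));
    try apply INR_half_gt_0; try assumption; [apply is_Int01_gamma_factor|].
  intros g u v Hg Hu Hv.
  rewrite !trinom_pmf_rescaled by exact Hg.
  unfold piH1, piH1_unnorm, gamma_prior, gamma_factor, beta_kernel.
  rewrite !Rpower_half_pred, !Rpower_mhalf by lra.
  (* [Kconst r d] is not known to be nonzero, so [field] must treat its inverse as an atom. *)
  set (iK := / Kconst r d). rewrite !pow_add. field.
  repeat split; try lra; apply Rgt_not_eq, sqrt_lt_R0; lra.
Qed.

Lemma pH0_eq m00 m10 m20 m01 m11 m21 a : 0 < a ->
  pH0 m00 m10 m20 m01 m11 m21 a =
  multinom m00 m10 m20 * multinom m01 m11 m21 * / Beta (/2) (/2) * / Beta a (/2)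
  * Beta (INR (m10 + m11) + /2) (INR (m20 + m21) + /2)
  * Beta (INR (m10 + m11) + INR (m20 + m21) + a) (INR (m00 + m01) + /2).
Proof.
  intros Ha. assert (HB := Beta_gt_0 (/2) (/2) ltac:(lra) ltac:(lra)).
  assert (HBa := Beta_gt_0 a (/2) Ha ltac:(lra)).
  unfold pH0. apply (Int2_product _ (gamma_factor (m10 + m11) (m20 + m21))
    (beta_kernel (INR (m10 + m11) + INR (m20 + m21) + a) (INR (m00 + m01) + /2))).
  - apply is_Int01_gamma_factor.
  - apply is_Int01_Beta;
      generalize (pos_INR (m10 + m11)), (pos_INR (m20 + m21)), (pos_INR (m00 + m01)); lra.
  - intros g t Hg Ht. rewrite !trinom_pmf_rescaled by exact Hg.
    unfold piH0, gamma_prior, gamma_factor, beta_kernel.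
    replace (INR (m10 + m11) + INR (m20 + m21) + a - 1)
      with (INR (m10 + m11) + (INR (m20 + m21) + (a - 1))) by ring.
    rewrite !Rpower_INR_add, Rpower_half_pred, !Rpower_mhalf by lra.
    rewrite !pow_add. field.
    repeat split; try lra; apply Rgt_not_eq, sqrt_lt_R0; lra.
Qed.

Lemma Iconst_eq al0 be0 al1 be1 r d :
  0 < al0 -> 0 < be0 -> 0 < al1 -> 0 < be1 -> 0 <= r -> 0 <= d ->
  Iconst al0 be0 al1 be1 r d =
  mixed_power_integral al0 be0 al1 be1 r d / (Beta al0 be0 * Beta al1 be1).
Proof.
  intros Hal0 Hbe0 Hal1 Hbe1 Hr Hd.
  assert (HB0 := Beta_gt_0 al0 be0 Hal0 Hbe0). assert (HB1 := Beta_gt_0 al1 be1 Hal1 Hbe1).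
  unfold Rdiv. rewrite Rmult_comm, <- Int01_Int01_mixed_power by assumption.
  unfold Iconst, Int2. apply Int01_ext; intros u Hu. apply Int01_ext; intros v Hv.
  unfold beta_dens, beta_kernel. field. lra.
Qed.

Lemma multinom_gt_0 n0 n1 n2 : 0 < multinom n0 n1 n2.
Proof.
  apply Rdiv_lt_0_compat; [|repeat apply Rmult_lt_0_compat]; apply INR_fact_lt_0.
Qed.

Theorem mainTheorem12 (m00 m10 m20 m01 m11 m21 : nat) (a d : R)
  (ha : 0 < a) (hd : 0 <= d) (hm0 : (0 < m00 + m10 + m20)%nat) :
  let r := INR (m01 + m11 + m21) / INR (m00 + m10 + m20) in
  let m0p := INR (m00 + m01) in
  let m1p := INR (m10 + m11) in
  let m2p := INR (m20 + m21) in
  let C := multinom m00 m10 m20 * multinom m01 m11 m21 in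
  let al0 := INR (m10 + m20) + /2 in
  let be0 := INR m00 + /2 in
  let al1 := INR (m11 + m21) + /2 in
  let be1 := INR m01 + /2 in
  let K := Kconst r d in
  let I := Iconst al0 be0 al1 be1 r d in
  let p0 := pH0 m00 m10 m20 m01 m11 m21 a in
  let p1 := pH1 m00 m10 m20 m01 m11 m21 r d in
  p0 = C * (Beta (m1p + /2) (m2p + /2) / Beta (/2) (/2))
         * (Beta (m1p + m2p + a) (m0p + /2) / Beta a (/2)) /\
  p1 = C * (Beta (m1p + /2) (m2p + /2) * Beta al0 be0 * Beta al1 be1
            / (Beta (/2) (/2) ^ 3)) * (I / K) /\
  / (p0 / p1) = Beta al0 be0 * Beta al1 be1 * Beta a (/2)
                / (Beta (m1p + m2p + a) (m0p + /2) * Beta (/2) (/2) ^ 2) * (I / K) /\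
  (d = 0 -> K = 1 /\ I = 1).
Proof.
  intros r m0p m1p m2p C al0 be0 al1 be1 K I p0 p1.
  assert (Hr : 0 <= r) by (apply Rdiv_le_0_compat; [apply pos_INR|apply lt_0_INR; lia]).
  assert (Hh : 0 < /2) by lra.
  assert (Hal0 := INR_half_gt_0 (m10 + m20)). assert (Hbe0 := INR_half_gt_0 m00).
  assert (Hal1 := INR_half_gt_0 (m11 + m21)). assert (Hbe1 := INR_half_gt_0 m01).
  fold al0 be0 al1 be1 in Hal0, Hbe0, Hal1, Hbe1.
  assert (HB := Beta_gt_0 _ _ Hh Hh). assert (HBa := Beta_gt_0 _ _ ha Hh).
  assert (HB0 := Beta_gt_0 _ _ Hal0 Hbe0). assert (HB1 := Beta_gt_0 _ _ Hal1 Hbe1).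
  assert (HBm := Beta_gt_0 _ _ (INR_half_gt_0 (m10 + m11)) (INR_half_gt_0 (m20 + m21))).
  fold m1p m2p in HBm.
  assert (HBt : 0 < Beta (m1p + m2p + a) (m0p + /2))
    by (apply Beta_gt_0; generalize (pos_INR (m10 + m11)), (pos_INR (m20 + m21)),
          (pos_INR (m00 + m01)); unfold m0p, m1p, m2p; lra).
  assert (HC : 0 < C) by (apply Rmult_lt_0_compat; apply multinom_gt_0).
  assert (Ep0 := pH0_eq m00 m10 m20 m01 m11 m21 a ha). fold p0 C m0p m1p m2p in Ep0.
  assert (Ep1 := pH1_eq m00 m10 m20 m01 m11 m21 r d Hr hd). fold p1 C K m1p m2p al0 be0 al1 be1 in Ep1.
  assert (EI := Iconst_eq al0 be0 al1 be1 r d Hal0 Hbe0 Hal1 Hbe1 Hr hd). fold I in EI.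
  assert (EK := Kconst_eq r d Hr hd). fold K in EK.
  assert (Ep1' : p1 = C * (Beta (m1p + /2) (m2p + /2) * Beta al0 be0 * Beta al1 be1
                          / Beta (/2) (/2) ^ 3) * (I / K)).
  { rewrite Ep1, EI. unfold Rdiv. set (iK := / K). field. lra. }
  split; [rewrite Ep0; field; lra|]. split; [exact Ep1'|]. split.
  - rewrite Rinv_div, Ep1', Ep0. unfold Rdiv. set (iK := / K). field. lra.
  - intros Hd0. rewrite mixed_power_integral_pow0 in EK, EI by (assumption || lra).
    split; [rewrite EK|rewrite EI]; field; lra.
Qed.
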